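(* Let $\mathcal G$ be an ample groupoid and $S$ a semifield. If the Steinberg algebra $A_S(\mathcal G)$ is congruence-simple, then (1) $S$ is either a field or the Boolean semifield $\mathbb B$, and (2) $\mathcal G$ is both minimal and effective.
   Context: A semifield is a nontrivial commutative semiring (commutative monoid addition with $0$, commutative associative multiplication with $1$, distributivity, $0$ absorbing) in which every nonzero element has a multiplicative inverse. $\mathbb B=(\{0,1\},\text{or},\text{and})$. A congruence on a hemiring $R$ is an equivalence relation $\sim$ such that $r\sim s$ implies $t+r\sim t+s$, $tr\sim ts$, $rt\sim st$ for all $t$; $R$ is congruence-simple if its only congruences are $R\times R$ and the diagonal. An ample groupoid is a topological groupoid whose unit space $\mathcal G^{(0)}$ is locally compact Hausdorff and totally disconnected and whose source and range maps $s,r$ are local homeomorphisms ($\mathcal G$ need not be Hausdorff). A subset $D\subseteq\mathcal G^{(0)}$ is invariant if $s(\gamma)\in D$ implies $r(\gamma)\in D$ for all $\gamma$. $\mathcal G$ is minimal if $\mathcal G^{(0)}$ has no open invariant subsets other than $\varnothing$ and $\mathcal G^{(0)}$. $\mathcal G$ is effective if the interior of the isotropy subgroupoid $\operatorname{Iso}(\mathcal G)=\{\gamma: s(\gamma)=r(\gamma)\}$ equals $\mathcal G^{(0)}$. The Steinberg algebra $A_S(\mathcal G)$ is the set of functions $\mathcal G\to S$ of the form $\sum_{U\in F}s_U1_U$ with $F$ a finite set of compact open bisections (subsets on which $s,r$ are homeomorphisms onto their images), with pointwise addition and convolution $(f*g)(\gamma)=\sum_{\alpha\beta=\gamma}f(\alpha)g(\beta)$.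 *)

From HB Require Import structures.
From mathcomp Require Import all_boot all_order all_algebra.
From mathcomp Require Import all_classical all_reals all_analysis.
Set Implicit Arguments. Unset Strict Implicit. Unset Printing Implicit Defensive.
Import Order.TTheory GRing.Theory Num.Theory.
Local Open Scope classical_set_scope.
Local Open Scope ring_scope.

(* g * h is defined iff src g = rng h (the product of the paper: s(g)=r(h)).  *)
Record groupoid (T : Type) := Groupoid {
  src : T -> T;
  rng : T -> T;
  gmul : T -> T -> T;
  ginv : T -> T;
  src_src : forall g, src (src g) = src g;
  rng_src : forall g, rng (src g) = src g;
  src_rng : forall g, src (rng g) = rng g;
  rng_rng : forall g, rng (rng g) = rng g;
  src_gmul : forall g h, src g = rng h -> src (gmul g h) = src h;
  rng_gmul : forall g h, src g = rng h -> rng (gmul g h) = rng g;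
  gmulA : forall g h k, src g = rng h -> src h = rng k ->
    gmul (gmul g h) k = gmul g (gmul h k);
  gmul_src : forall g, gmul g (src g) = g;
  rng_gmul_l : forall g, gmul (rng g) g = g;
  src_ginv : forall g, src (ginv g) = rng g;
  rng_ginv : forall g, rng (ginv g) = src g;
  gmulVg : forall g, gmul (ginv g) g = src g;
  gmulgV : forall g, gmul g (ginv g) = rng g
}.

Section GroupoidDefs.
Context {T : topologicalType} (G : groupoid T).

Definition unit_space : set T := [set x | src G x = x].

Definition open_in (A B : set T) := exists O : set T, open O /\ B = O `&` A.

Definition homeo_onto_image (f : T -> T) (U : set T) :=
  {within U, continuous f} /\
  exists h : T -> T, (forall x, U x -> h (f x) = x) /\
                     {within f @` U, continuous h}.

Definition local_homeo (f : T -> T) :=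
  forall g, exists U : set T,
    [/\ open U, U g, open_in unit_space (f @` U) & homeo_onto_image f U].

Definition topological_groupoid :=
  {within [set p : T * T | src G p.1 = rng G p.2],
     continuous (fun p : T * T => gmul G p.1 p.2)} /\
  continuous (ginv G).

Definition units_hausdorff :=
  forall x y, unit_space x -> unit_space y -> x <> y ->
    exists U V : set T, [/\ open U, open V, U x, V y & (U `&` V `&` unit_space = set0)].

Definition units_locally_compact :=
  forall x, unit_space x -> exists (O K : set T),
    [/\ open O, O x, K `<=` unit_space, compact K & O `&` unit_space `<=` K].

Definition ample :=
  [/\ topological_groupoid, units_locally_compact, units_hausdorff,
      totally_disconnected unit_space & local_homeo (src G) /\ local_homeo (rng G)].

Definition invariant (D : set T) :=
  forall g, D (src G g) -> D (rng G g).

Definition minimal_groupoid :=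
  forall D, open_in unit_space D -> invariant D -> D = set0 \/ D = unit_space.

Definition isotropy : set T := [set g | src G g = rng G g].

Definition effective_groupoid := interior isotropy = unit_space.

Definition bisection (B : set T) :=
  homeo_onto_image (src G) B /\ homeo_onto_image (rng G) B.

Definition compact_open_bisection (B : set T) :=
  [/\ compact B, open B & bisection B].

Variable S : comNzSemiRingType.

Definition steinberg : set (T -> S) :=
  [set f | exists l : seq (S * set T),
     (forall p, p \in l -> compact_open_bisection p.2) /\
     f = (fun x => \sum_(p <- l) (if x \in p.2 then p.1 else 0))].

Definition sadd (f g : T -> S) : T -> S := fun x => f x + g x.

Definition steinberg_conv (f g : T -> S) : T -> S := fun x =>
  (\sum_(p \in [set p : T * T | src G p.1 = rng G p.2 /\ gmul G p.1 p.2 = x])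
      (f p.1 * g p.2))%R.

End GroupoidDefs.

Definition congruence {R : Type} (A : set R) (add mul : R -> R -> R)
    (E : R -> R -> Prop) :=
  [/\ (forall x y, E x y -> A x /\ A y),
      (forall x, A x -> E x x),
      (forall x y, E x y -> E y x),
      (forall x y z, E x y -> E y z -> E x z) &
      (forall r s t, A t -> E r s ->
         [/\ E (add t r) (add t s), E (mul t r) (mul t s) & E (mul r t) (mul s t)])].

Definition congruence_simple {R : Type} (A : set R) (add mul : R -> R -> R) :=
  forall E, congruence A add mul E ->
    (forall x y, A x -> A y -> E x y) \/ (forall x y, E x y -> x = y).

Definition semifield (S : comNzSemiRingType) :=
  forall x : S, x != 0 -> exists y, x * y = 1.

(* a semifield is a field iff it has additive inverses *)
Definition is_field_semiring (S : comNzSemiRingType) :=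
  forall x : S, exists y, x + y = 0.

Definition is_boolean_semifield (S : comNzSemiRingType) :=
  exists f : S -> bool, [/\ bijective f, f 0 = false, f 1 = true,
    (forall x y, f (x + y) = f x || f y) &
    (forall x y, f (x * y) = f x && f y)].

(* Each conclusion comes from a map [phi] on A_S(G) whose kernel is a
   congruence, because [phi] is compatible with addition and with convolution
   by the generators [c 1_U]; congruence-simplicity then makes [phi] constant or
   injective on A_S(G), and a suitable pair of elements refutes one alternative.
   - [f |-> (f x == 0)_x]: compatible when S has no zero divisors and (S not
     being a field) no nonzero sums equal to 0; it identifies [a 1_C] with
     [1_C], so every nonzero [a] equals 1 and S is Boolean.
   - [f |-> f] off [s^-1(D)], for a proper nonempty open invariant D: it
     identifies [1_C] with 0 for a compact open C inside D.
   - [f |-> (sum of f over r^-1(x) ∩ s^-1(y))_(x,y)]: for a compact open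
     bisection B of isotropy through a non-unit it identifies [1_B] with
     [1_(s B)], which differ at that non-unit.
   The topological input is that ample groupoids have enough compact open
   bisections: they are closed under products, and exist inside any open set
   of units (the unit space is zero-dimensional) or of isotropy. *)

From HB Require Import structures.
From mathcomp Require Import all_boot all_order all_algebra.
From mathcomp Require Import all_classical all_reals all_analysis.
Set Implicit Arguments. Unset Strict Implicit. Unset Printing Implicit Defensive.
Import Order.TTheory GRing.Theory Num.Theory.
Local Open Scope classical_set_scope.
Local Open Scope ring_scope.

(** * Topology *)

Definition continuous_within_at {T U : topologicalType} (A : set T) (f : T -> U) x :=
  forall W, nbhs (f x) W -> nbhs x (fun z => A z -> W (f z)).

Section ContinuousWithinAt.
Context {T U V : topologicalType}.

Lemma within_continuousP (A : set T) (f : T -> U) :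
  {within A, continuous f} <-> forall x, A x -> continuous_within_at A f x.
Proof.
rewrite /from_subspace subspace_continuousP; split=> H x Ax.
  by move=> W Wn; have := H x Ax W Wn.
by move=> W Wn; apply: H.
Qed.

Lemma continuous_within_atS (A B : set T) (f : T -> U) x :
  B `<=` A -> continuous_within_at A f x -> continuous_within_at B f x.
Proof. by move=> BA H W /H; apply: filterS => z HA Bz; exact/HA/BA. Qed.

Lemma continuous_within_at_id (A : set T) x : continuous_within_at A id x.
Proof. by move=> W; apply: filterS => z. Qed.

Lemma continuous_at_within (A : set T) (f : T -> U) x :
  {for x, continuous f} -> continuous_within_at A f x.
Proof.
move=> H W Wn; have : nbhs x (f @^-1` W) by exact: H.
by apply: filterS => z Wz _.
Qed.

Lemma continuous_within_at_comp (A : set T) (B : set U) (f : T -> U) (g : U -> V) x :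
  (forall z, A z -> B (f z)) ->
  continuous_within_at A f x -> continuous_within_at B g (f x) ->
  continuous_within_at A (g \o f) x.
Proof.
move=> AB Hf Hg W /Hg /Hf; apply: filterS => z Hz Az.
exact: Hz Az (AB _ Az).
Qed.

Lemma nbhs_pairP (a : T) (b : U) (W : set (T * U)) : nbhs (a, b) W ->
  exists P Q, [/\ nbhs a P, nbhs b Q & forall x y, P x -> Q y -> W (x, y)].
Proof.
move=> [[P Q] /= [HP HQ] H].
by exists P, Q; split=> // x y Px Qy; apply: (H (x, y)).
Qed.

End ContinuousWithinAt.

Section CompactCover.
Context {T : topologicalType}.

Lemma compact_directed_cover (K : set T) (O : set (set T)) : compact K ->
  O !=set0 -> (forall A B, O A -> O B -> O (A `|` B)) ->
  (forall y, K y -> exists2 A, O A & nbhs y A) -> exists2 A, O A & K `<=` A.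
Proof.
move=> cK [A0 OA0] OU cov; apply: contrapT => noA.
pose F := filter_from O (fun A => K `\` A).
have FF : Filter F.
  apply: filter_from_filter; first by exists A0.
  move=> A B OA OB; exists (A `|` B); first exact: OU.
  by move=> y [Ky nAB]; split; split => // ?; apply: nAB; [left|right].
have PF : ProperFilter F.
  apply: filter_from_proper => A OA; apply: contrapT => nK.
  by apply: noA; exists A => // y Ky; apply: contrapT => nAy; apply: nK; exists y.
have FK : F K by exists A0 => // y [].
have [p [Kp clp]] := cK F PF FK.
have [A OA nA] := cov p Kp.
have FA : F (K `\` A) by exists A.
by have [z [[_ nAz] Az]] := clp _ _ FA nA.
Qed.

End CompactCover.

Lemma setI3_eq0_nmem {T : Type} (A B C : set T) z :
  A `&` B `&` C = set0 -> A z -> B z -> C z -> False.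
Proof. by move=> H Az Bz Cz; have : (A `&` B `&` C) z by []; rewrite H. Qed.

Section HausdorffSubset.
Context {T : topologicalType} (X : set T).
Hypothesis hausX : forall x y, X x -> X y -> x <> y ->
  exists U V : set T, [/\ open U, open V, U x, V y & U `&` V `&` X = set0].

Lemma separate_point_compact (K : set T) a : compact K -> K `<=` X -> X a -> ~ K a ->
  exists U V, [/\ open U, open V, U a, K `<=` V & U `&` V `&` X = set0].
Proof.
move=> cK KX Xa nKa.
pose O := [set V : set T | open V /\
  exists U, [/\ open U, U a & U `&` V `&` X = set0]].
have [] := @compact_directed_cover _ K O cK.
- exists set0; split; first exact: open0.
  by exists setT; split => //; [exact: openT | rewrite setI0 set0I].
- move=> A B [oA [U1 [oU1 U1a H1]]] [oB [U2 [oU2 U2a H2]]].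
  split; first exact: openU.
  exists (U1 `&` U2); split => //; first exact: openI.
  rewrite -subset0 => z [[[U1z U2z] [Az|Bz]] Xz].
  + exact: (setI3_eq0_nmem H1 U1z Az Xz).
  + exact: (setI3_eq0_nmem H2 U2z Bz Xz).
- move=> b Kb; have ab : a <> b by move=> ab; apply: nKa; rewrite ab.
  have [U [V [oU oV Ua Vb H]]] := hausX Xa (KX _ Kb) ab.
  exists V; first by split => //; exists U.
  exact: open_nbhs_nbhs.
- by move=> V [oV [U [oU Ua H]]] KV; exists U, V.
Qed.

Lemma separate_compact (K1 K2 : set T) : compact K1 -> compact K2 ->
  K1 `<=` X -> K2 `<=` X -> K1 `&` K2 = set0 ->
  exists U V, [/\ open U, open V, K1 `<=` U, K2 `<=` V & U `&` V `&` X = set0].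
Proof.
move=> cK1 cK2 K1X K2X K12.
pose O := [set U : set T | open U /\
  exists V, [/\ open V, K2 `<=` V & U `&` V `&` X = set0]].
have [] := @compact_directed_cover _ K1 O cK1.
- exists set0; split; first exact: open0.
  by exists setT; split => //; [exact: openT | rewrite !set0I].
- move=> A B [oA [V1 [oV1 KV1 H1]]] [oB [V2 [oV2 KV2 H2]]].
  split; first exact: openU.
  exists (V1 `&` V2); split => //; first exact: openI.
    by move=> z K2z; split; [apply: KV1 | apply: KV2].
  rewrite -subset0 => z [[[Az|Bz] [V1z V2z]] Xz].
  + exact: (setI3_eq0_nmem H1 Az V1z Xz).
  + exact: (setI3_eq0_nmem H2 Bz V2z Xz).
- move=> a K1a; have nK2a : ~ K2 a.
    by move=> K2a; have : (K1 `&` K2) a by []; rewrite K12.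
  have [U [V [oU oV Ua K2V H]]] :=
    separate_point_compact cK2 K2X (K1X _ K1a) nK2a.
  exists U; first by split => //; exists V.
  exact: open_nbhs_nbhs.
- by move=> U [oU [V [oV K2V H]]] K1U; exists U, V.
Qed.

Lemma compactI_sub (K1 K2 : set T) : compact K1 -> compact K2 ->
  K1 `<=` X -> K2 `<=` X -> compact (K1 `&` K2).
Proof.
rewrite !compact_ultra => cK1 cK2 K1X K2X F UF FK.
have FK1 : F K1 by apply: filterS FK => z [].
have FK2 : F K2 by apply: filterS FK => z [].
have [p [K1p Fp]] := cK1 F UF FK1; have [q [K2q Fq]] := cK2 F UF FK2.
have [pq|npq] := pselect (p = q); first by exists p; split => //; split => //; rewrite pq.
have [U [V [oU oV Up Vq H]]] := hausX (K1X _ K1p) (K2X _ K2q) npq.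
have FU : F U by apply: Fp; exact: open_nbhs_nbhs.
have FV : F V by apply: Fq; exact: open_nbhs_nbhs.
have FX : F X by apply: filterS FK1.
have : F (U `&` V `&` X) by apply: filterI => //; exact: filterI.
by rewrite H => /filter_not_empty.
Qed.

End HausdorffSubset.

Section ZeroDimensional.
Context {T : topologicalType} (X : set T).
Hypothesis hausX : forall x y, X x -> X y -> x <> y ->
  exists U V : set T, [/\ open U, open V, U x, V y & U `&` V `&` X = set0].

Section QuasiComponent.
Variables (K0 : set T) (x : T).
Hypotheses (cK0 : compact K0) (K0X : K0 `<=` X) (K0x : K0 x).

Definition rel_clopen_nbhs : set (set T) := [set C | [/\ C x,
  (exists2 U, open U & C = K0 `&` U) & (exists2 F, closed F & C = K0 `&` F)]].

(* [T] is not Hausdorff, so [K0] need not be closed: the closures make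
   [quasi_component] compact. *)
Definition quasi_component := K0 `&` \bigcap_(C in rel_clopen_nbhs) closure C.

Local Notation CC := rel_clopen_nbhs.
Local Notation Q := quasi_component.

Lemma rel_clopen_nbhs_sub C : CC C -> C `<=` K0.
Proof. by move=> [_ [U _ ->] _] z []. Qed.

Lemma rel_clopen_nbhsT : CC K0.
Proof.
split=> //; first by exists setT; [exact: openT | rewrite setIT].
by exists setT; [exact: closedT | rewrite setIT].
Qed.

Lemma rel_clopen_nbhsI C D : CC C -> CC D -> CC (C `&` D).
Proof.
move=> [Cx [U oU CU] [F cF CF]] [Dx [V oV DV] [F' cF' DF]]; split => //.
- by exists (U `&` V); [exact: openI | rewrite CU DV setIACA setIid].
- by exists (F `&` F'); [exact: closedI | rewrite CF DF setIACA setIid].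
Qed.

Lemma quasi_component_sub C : CC C -> Q `<=` C.
Proof.
move=> CCC y [K0y /(_ _ CCC) cly]; case: CCC => _ _ [F cF CE].
rewrite CE in cly *; split => //; apply: cF.
by apply: closureS cly => ? [].
Qed.

Lemma quasi_component_compact : compact Q.
Proof.
apply: compact_closedI => //.
by apply: closed_bigI => C _; exact: closed_closure.
Qed.

Lemma quasi_component_x : Q x.
Proof. by split => // C [Cx _ _]; exact: subset_closure. Qed.

Lemma quasi_component_avoid K : compact K -> K `<=` K0 -> K `&` Q = set0 ->
  exists2 C, CC C & C `&` K = set0.
Proof.
move=> cK KK0 KQ.
have [] := @compact_directed_cover _ K [set A | exists2 C, CC C & A = ~` C] cK.
- by exists (~` K0), K0 => //; exact: rel_clopen_nbhsT.
- move=> A B [C CCC ->] [D CCD ->].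
  by exists (C `&` D); [exact: rel_clopen_nbhsI | rewrite setCI].
- move=> y Ky; have nQy : ~ Q y.
    by move=> Qy; have : (K `&` Q) y by []; rewrite KQ.
  have /existsNP [C /not_implyP [CCC ncl]] : ~ (forall C, CC C -> closure C y).
    by move=> H; apply: nQy; split => //; apply: KK0.
  exists (~` C); first by exists C.
  have : nbhs y (~` closure C).
    by apply: open_nbhs_nbhs; split => //; exact/closed_openC/closed_closure.
  by apply: filterS => z nclz Cz; apply/nclz/subset_closure.
- move=> A [C CCC ->] KC; exists C => //.
  by rewrite -subset0 => z [Cz /KC].
Qed.

Lemma quasi_component_rel_clopen (B : set T) : B x ->
  (exists2 U, open U & B = Q `&` U) -> (exists2 F, closed F & B = Q `&` F) ->
  B = Q.
Proof.
move=> Bx [U oU BU] [F cF BF].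
have QK0 : Q `<=` K0 by move=> z [].
pose A1 := Q `&` F; pose A2 := Q `&` ~` U.
have cA1 : compact A1 by exact/compact_closedI/cF/quasi_component_compact.
have cA2 : compact A2.
  by apply: compact_closedI; [exact: quasi_component_compact|exact: open_closedC].
have A1X : A1 `<=` X by move=> z [/QK0 /K0X].
have A2X : A2 `<=` X by move=> z [/QK0 /K0X].
have A12 : A1 `&` A2 = set0.
  rewrite -subset0 => z [[Qz Fz] [_ nUz]].
  have : B z by rewrite BF.
  by rewrite BU => -[].
have [U1 [V1 [oU1 oV1 A1U1 A2V1 H1]]] := separate_compact hausX cA1 cA2 A1X A2X A12.
pose K := K0 `&` ~` (U1 `|` V1).
have cK : compact K by apply: compact_closedI => //; exact/open_closedC/openU.
have KQ : K `&` Q = set0.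
  rewrite -subset0 => z [[_ nUV] Qz]; apply: nUV.
  have [Uz|nUz] := pselect (U z); last by right; apply: A2V1.
  have : B z by rewrite BU.
  by rewrite BF => -[_ Fz]; left; apply: A1U1.
have [C CCC CK] := quasi_component_avoid cK (fun z => @proj1 _ _) KQ.
have CUV : C `<=` U1 `|` V1.
  move=> z Cz; apply: contrapT => nUV.
  have : (C `&` K) z by split => //; split; [exact: rel_clopen_nbhs_sub CCC _ Cz|].
  by rewrite CK.
have CU1 : CC (C `&` U1).
  case: CCC => Cx [Uc oUc CUc] [Fc cFc CFc]; split.
  - have : B x by [].
    rewrite BF => -[Qx Fx]; split => //; exact: A1U1.
  - by exists (Uc `&` U1); [exact: openI | rewrite CUc setIA].
  - exists (Fc `&` ~` V1); first by apply: closedI => //; exact: open_closedC.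
    apply/seteqP; split => z.
      move=> [Cz U1z]; have := Cz; rewrite {1}CFc => -[K0z Fcz].
      split => //; split => // V1z.
      by apply: (setI3_eq0_nmem H1 U1z V1z); apply: K0X.
    move=> [K0z [Fcz nV1z]]; have Cz : C z by rewrite CFc.
    by split => //; case: (CUV _ Cz).
have QU1 : Q `<=` U1 by move=> z /(quasi_component_sub CU1) [].
rewrite BU; apply/seteqP; split => [z [] //|z Qz]; split => //.
apply: contrapT => nUz; have A2z : A2 z by [].
exact: (setI3_eq0_nmem H1 (QU1 _ Qz) (A2V1 _ A2z) (A2X _ A2z)).
Qed.

Lemma quasi_component_connected : connected Q.
Proof.
move=> B [b Bb] [U oU BU] [F cF BF].
have [Bx|nBx] := pselect (B x).
  by apply: quasi_component_rel_clopen => //; [exists U | exists F].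
have E : Q `&` ~` F = Q.
  apply: quasi_component_rel_clopen.
  - split; first exact: quasi_component_x.
    by move=> Fx; apply: nBx; rewrite BF; split => //; exact: quasi_component_x.
  - by exists (~` F); [exact: closed_openC|].
  - exists (~` U); first exact: open_closedC.
    apply/seteqP; split => z [Qz nz]; split => // Hz; apply: nz.
    + have : B z by rewrite BU.
      by rewrite BF => -[].
    + have : B z by rewrite BF.
      by rewrite BU => -[].
have : B b by [].
rewrite BF => -[Qb Fb].
have : (Q `&` ~` F) b by rewrite E.
by case.
Qed.

End QuasiComponent.

Hypothesis oX : open X.
Hypothesis lcX : forall x, X x -> exists O K : set T,
  [/\ open O, O x, K `<=` X, compact K & O `&` X `<=` K].
Hypothesis tdX : totally_disconnected X.

(* The quasi-component of [x] in a compact neighbourhood is connected, hence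
   reduced to [x]; compactness then yields one relatively clopen piece inside [W]. *)
Lemma compact_open_nbhs_sub x W : X x -> open W -> W x ->
  exists C, [/\ compact C, open C, C x, C `<=` W & C `<=` X].
Proof.
move=> Xx oW Wx.
have [N [K0 [oN Nx K0X cK0 NK0]]] := lcX Xx.
have K0x : K0 x by apply: NK0.
have : quasi_component K0 x `<=` connected_component X x.
  apply: connected_component_max; first exact: quasi_component_x.
    by move=> z [/K0X].
  exact: quasi_component_connected cK0 K0X K0x.
rewrite tdX // => Qx.
pose K := K0 `&` ~` (N `&` W).
have cK : compact K by apply: compact_closedI => //; exact/open_closedC/openI.
have KQ : K `&` quasi_component K0 x = set0.
  rewrite -subset0 => z [[_ nNW] /Qx zx]; apply: nNW; rewrite zx; by split.
have [C CCC CK] := quasi_component_avoid K0x cK (fun z => @proj1 _ _) KQ.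
have CNW : C `<=` N `&` W.
  move=> z Cz; apply: contrapT => nNW.
  have : (C `&` K) z by split => //; split; [exact: rel_clopen_nbhs_sub CCC _ Cz|].
  by rewrite CK.
case: CCC => Cx [Uc oUc CUc] [Fc cFc CFc].
exists C; split => //.
- by rewrite CFc; exact: compact_closedI.
- have -> : C = (N `&` X) `&` (W `&` Uc).
    apply/seteqP; split => z.
      move=> Cz; have [Nz Wz] := CNW _ Cz; move: Cz; rewrite {1}CUc => -[K0z Ucz].
      by split; split => //; apply: K0X.
    by move=> [[Nz Xz] [Wz Ucz]]; rewrite CUc; split => //; exact: NK0.
  by apply: openI; apply: openI.
- by move=> z /CNW [].
- by move=> z; rewrite {1}CUc => -[/K0X].
Qed.

End ZeroDimensional.

(** * Compact open bisections *)

Section GroupoidAlgebra.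
Context {T : topologicalType} (G : groupoid T).
Local Notation s := (src G).
Local Notation r := (rng G).
Local Notation "a ** b" := (gmul G a b) (at level 40).
Local Notation X := (unit_space G).

Lemma src_unit g : X (s g). Proof. by rewrite /unit_space /= src_src. Qed.
Lemma rng_unit g : X (r g). Proof. by rewrite /unit_space /= src_rng. Qed.
Lemma unit_rng x : X x -> r x = x. Proof. by move=> Xx; rewrite -Xx rng_src. Qed.

Lemma gmulKg a b : s a = r b -> ginv G a ** (a ** b) = b.
Proof.
move=> ab; rewrite -gmulA ?src_ginv //.
by rewrite gmulVg ab rng_gmul_l.
Qed.

Lemma gmulKVg a b : r a = r b -> a ** (ginv G a ** b) = b.
Proof.
move=> ab; rewrite -gmulA ?rng_ginv ?src_ginv //.
by rewrite gmulgV ab rng_gmul_l.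
Qed.

Lemma gmulgK a b : s a = r b -> (a ** b) ** ginv G b = a.
Proof. by move=> ab; rewrite gmulA ?rng_ginv // gmulgV -ab gmul_src. Qed.

Lemma gmulgKV a b : s a = s b -> (a ** ginv G b) ** b = a.
Proof.
by move=> ab; rewrite gmulA ?src_ginv ?rng_ginv // gmulVg -ab gmul_src.
Qed.

Definition set_gmul (U V : set T) :=
  [set x | exists a b, [/\ U a, V b, s a = r b & x = a ** b]].

End GroupoidAlgebra.

Lemma image_inverse {T U : Type} (f : T -> U) (h : U -> T) (A : set T) :
  (forall x, A x -> h (f x) = x) -> forall y, (f @` A) y -> A (h y) /\ f (h y) = y.
Proof. by move=> hA y [u Au <-]; rewrite hA. Qed.

Definition local_inverse {T : topologicalType} (f : T -> T) (U : set T) h :=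
  (forall x, U x -> h (f x) = x) /\
  (forall y, (f @` U) y -> continuous_within_at (f @` U) h y).

Section TopologicalGroupoid.
Context {T : topologicalType} (G : groupoid T).
Local Notation s := (src G).
Local Notation r := (rng G).
Local Notation "a ** b" := (gmul G a b) (at level 40).
Local Notation X := (unit_space G).
Local Notation cob := (compact_open_bisection G).

Lemma local_homeo_continuous f : local_homeo G f -> continuous f.
Proof.
move=> H g; have [U [oU Ug _ [cU _]]] := H g.
by move: cU; rewrite continuous_open_subspace // => /(_ g (mem_set Ug)).
Qed.

Lemma open_unit_space : local_homeo G s -> open X.
Proof.
move=> Hs; rewrite openE => x Xx; have [U [oU Ux _ [_ [h [hU _]]]]] := Hs x.
have oN : open (U `&` s @^-1` U).
  by apply: openI => //; move/continuousP: (local_homeo_continuous Hs); apply.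
have : nbhs x (U `&` s @^-1` U) by apply: open_nbhs_nbhs; split => //; rewrite /= Xx.
apply: filterS => g [Ug Usg].
by rewrite /unit_space /=; have := hU _ Usg; rewrite src_src hU.
Qed.

Lemma open_in_unit_space_open B : local_homeo G s -> open_in X B -> open B.
Proof. by move=> Hs [V [oV ->]]; apply: openI => //; exact: open_unit_space. Qed.

Lemma local_homeo_open f B :
  local_homeo G s -> local_homeo G f -> open B -> open (f @` B).
Proof.
move=> Hs Hf oB; rewrite openE => _ [b Bb <-].
have [U [oU Ub oiU [_ [h [hU hc]]]]] := Hf b.
have fUb : (f @` U) (f b) by exists b.
have := (proj1 (within_continuousP _ _) hc) _ fUb B.
rewrite hU // => /(_ (open_nbhs_nbhs (conj oB Bb))) H1.
have H2 : nbhs (f b) (f @` U).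
  by apply: open_nbhs_nbhs; split => //; exact: open_in_unit_space_open oiU.
apply: filterS (filterI H1 H2) => y [Hy fUy].
have [_ E] := image_inverse hU fUy.
by exists (h y); [apply: Hy|].
Qed.

Lemma continuous_within_at_gmul (A : set T) (f1 f2 : T -> T) x :
  {within [set p : T * T | s p.1 = r p.2], continuous (fun p => p.1 ** p.2)} ->
  A x -> (forall z, A z -> s (f1 z) = r (f2 z)) ->
  continuous_within_at A f1 x -> continuous_within_at A f2 x ->
  continuous_within_at A (fun z => f1 z ** f2 z) x.
Proof.
move=> /within_continuousP Hm Ax Hc H1 H2 W /(Hm (f1 x, f2 x) (Hc _ Ax)).
move=> /nbhs_pairP [P [Q [/H1 HP /H2 HQ HPQ]]].
apply: filterS (filterI HP HQ) => z [Pz Qz] Az.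
exact: (HPQ _ _ (Pz Az) (Qz Az) (Hc _ Az)).
Qed.

Lemma cob_local_inverses B : cob B ->
  [/\ compact B, open B, exists hs, local_inverse s B hs
    & exists hr, local_inverse r B hr].
Proof.
case=> cB oB [[_ [hs [hsB hsc]]] [_ [hr [hrB hrc]]]]; split => //.
  by exists hs; split => //; move/within_continuousP: hsc.
by exists hr; split => //; move/within_continuousP: hrc.
Qed.

Lemma cob_of_local_inverses B : continuous s -> continuous r ->
  compact B -> open B -> (exists hs, local_inverse s B hs) ->
  (exists hr, local_inverse r B hr) -> cob B.
Proof.
move=> sc rc cB oB [hs [hsB hsc]] [hr [hrB hrc]]; split => //; split.
  split; first exact: continuous_subspaceT.
  by exists hs; split => //; apply/within_continuousP.
split; first exact: continuous_subspaceT.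
by exists hr; split => //; apply/within_continuousP.
Qed.

Lemma cob_unit B : continuous s -> continuous r ->
  compact B -> open B -> B `<=` X -> cob B.
Proof.
move=> sc rc cB oB BX; apply: cob_of_local_inverses => //.
- exists id; split; first by move=> z /BX.
  by move=> y _; exact: continuous_within_at_id.
- exists id; split; first by move=> z /BX /unit_rng.
  by move=> y _; exact: continuous_within_at_id.
Qed.

Lemma cob_src_inv B : cob B -> exists hs, forall a, B a -> hs (s a) = a.
Proof. by case/cob_local_inverses => _ _ [hs [H _]] _; exists hs. Qed.

Lemma cob_rng_inv B : cob B -> exists hr, forall a, B a -> hr (r a) = a.
Proof. by case/cob_local_inverses => _ _ _ [hr [H _]]; exists hr. Qed.

Lemma cob_src_inj B : cob B -> {in B &, injective s}.
Proof.
case/cob_src_inv => hs H a b /set_mem Ba /set_mem Bb e.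
by rewrite -(H a) // -(H b) // e.
Qed.

Lemma cob_rng_inj B : cob B -> {in B &, injective r}.
Proof.
case/cob_rng_inv => hr H a b /set_mem Ba /set_mem Bb e.
by rewrite -(H a) // -(H b) // e.
Qed.

End TopologicalGroupoid.

Section AmpleGroupoid.
Context {T : topologicalType} (G : groupoid T).
Local Notation s := (src G).
Local Notation r := (rng G).
Local Notation "a ** b" := (gmul G a b) (at level 40).
Local Notation X := (unit_space G).
Local Notation cob := (compact_open_bisection G).
Hypothesis amp : ample G.

Let Hs : local_homeo G s. Proof. by case: amp => _ _ _ _ []. Qed.
Let Hr : local_homeo G r. Proof. by case: amp => _ _ _ _ []. Qed.
Let Hmul : {within [set p : T * T | s p.1 = r p.2], continuous (fun p => p.1 ** p.2)}.
Proof. by case: amp => -[]. Qed.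
Let Hinv : continuous (ginv G). Proof. by case: amp => -[]. Qed.
Let sc : continuous s := local_homeo_continuous Hs.
Let rc : continuous r := local_homeo_continuous Hr.

Lemma set_gmul_compact U V : cob U -> cob V -> compact (set_gmul G U V).
Proof.
move=> /cob_local_inverses [cU _ [hs [hsU hsc]] _].
move=> /cob_local_inverses [cV _ _ [hr [hrV hrc]]].
have cK : compact (s @` U `&` r @` V).
  apply: (@compactI_sub _ X); first by case: amp.
  - by apply: continuous_compact => //; exact: continuous_subspaceT.
  - by apply: continuous_compact => //; exact: continuous_subspaceT.
  - by move=> _ [a _ <-]; exact: src_unit.
  - by move=> _ [b _ <-]; exact: rng_unit.
have -> : set_gmul G U V = (fun y => hs y ** hr y) @` (s @` U `&` r @` V).
  apply/seteqP; split.
  + move=> _ [a [b [Ua Vb ab ->]]]; exists (s a).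
      by split; [exists a | rewrite ab; exists b].
    by rewrite hsU // ab hrV.
  + move=> _ [y [[a Ua <-] [b Vb yb]] <-].
    by exists (hs (s a)), (hr (s a)); rewrite hsU // -yb hrV.
apply: continuous_compact cK; apply/within_continuousP => y [sUy rVy].
apply: continuous_within_at_gmul => //.
- move=> z [sUz rVz]; have [_ ->] := image_inverse hsU sUz.
  by have [_ ->] := image_inverse hrV rVz.
- by apply: continuous_within_atS (hsc _ sUy); move=> z [].
- by apply: continuous_within_atS (hrc _ rVy); move=> z [].
Qed.

(* Near [a b], the factor in [U] is recovered from the range, so
   [z = hr (r z) ** (ginv (hr (r z)) ** z)] with the second factor close to [b]. *)
Lemma set_gmul_open U V : cob U -> open V -> open (set_gmul G U V).
Proof.
move=> /cob_local_inverses [_ oU _ [hr [hrU hrc]]] oV.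
rewrite openE => _ [a0 [b0 [Ua0 Vb0 ab0 ->]]].
pose A0 := [set z | (r @` U) (r z)].
pose psi z := ginv G (hr (r z)) ** z.
have A0h z : A0 z -> U (hr (r z)) /\ r (hr (r z)) = r z by apply: image_inverse.
have A0x : A0 (a0 ** b0) by exists a0 => //; rewrite rng_gmul.
have psix : psi (a0 ** b0) = b0 by rewrite /psi rng_gmul // hrU // gmulKg.
have cpsi : continuous_within_at A0 psi (a0 ** b0).
  apply: continuous_within_at_gmul => //.
  - by move=> z /A0h [_ e]; rewrite src_ginv.
  - apply: (@continuous_within_at_comp _ _ _ _ setT) => //.
      apply: (continuous_within_at_comp (B := r @` U)) => [//||].
        exact/continuous_at_within/rc.
      exact: hrc.
    exact/continuous_at_within/Hinv.
  - exact: continuous_within_at_id.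
have /cpsi H1 : nbhs (psi (a0 ** b0)) V by rewrite psix; exact: open_nbhs_nbhs.
have H2 : nbhs (a0 ** b0) A0.
  apply: open_nbhs_nbhs; split => //.
  by move/continuousP: rc; apply; exact: local_homeo_open.
apply: filterS (filterI H1 H2) => z [Vz A0z]; have [Ua ra] := A0h z A0z.
exists (hr (r z)), (psi z); split => //; first exact: Vz.
  by rewrite /psi rng_gmul ?rng_ginv // src_ginv.
by rewrite /psi gmulKVg.
Qed.

Lemma set_gmul_src_inverse U V : cob U -> cob V ->
  exists hs, local_inverse s (set_gmul G U V) hs.
Proof.
move=> /cob_local_inverses [_ _ [hUs [hUsU hUsc]] _].
move=> /cob_local_inverses [_ _ [hVs [hVsV hVsc]] _].
exists (fun y => hUs (r (hVs y)) ** hVs y); split.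
  by move=> _ [a [b [Ua Vb ab ->]]]; rewrite src_gmul // hVsV // -ab hUsU.
have dec z : (s @` set_gmul G U V) z -> (s @` U) (r (hVs z)) /\ (s @` V) z.
  move=> [_ [a [b [Ua Vb ab ->]]] <-]; rewrite src_gmul // hVsV //.
  by split; [exists a | exists b].
have cVs y : (s @` set_gmul G U V) y ->
    continuous_within_at (s @` set_gmul G U V) hVs y.
  by move=> /dec [_ sVy]; apply: continuous_within_atS (hVsc _ sVy) => z /dec [].
move=> y Hy; apply: continuous_within_at_gmul => //; last exact: cVs.
- by move=> z /dec [H _]; have [_ ->] := image_inverse hUsU H.
- apply: (continuous_within_at_comp (B := s @` U)); first by move=> z /dec [].
    apply: (@continuous_within_at_comp _ _ _ _ setT) => //; first exact: cVs.
    exact/continuous_at_within/rc.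
  by apply: hUsc; case: (dec _ Hy).
Qed.

Lemma set_gmul_rng_inverse U V : cob U -> cob V ->
  exists hr, local_inverse r (set_gmul G U V) hr.
Proof.
move=> /cob_local_inverses [_ _ _ [hUr [hUrU hUrc]]].
move=> /cob_local_inverses [_ _ _ [hVr [hVrV hVrc]]].
exists (fun y => hUr y ** hVr (s (hUr y))); split.
  by move=> _ [a [b [Ua Vb ab ->]]]; rewrite rng_gmul // hUrU // ab hVrV.
have dec z : (r @` set_gmul G U V) z -> (r @` V) (s (hUr z)) /\ (r @` U) z.
  move=> [_ [a [b [Ua Vb ab ->]]] <-]; rewrite rng_gmul // hUrU //.
  by split; [exists b | exists a].
have cUr y : (r @` set_gmul G U V) y ->
    continuous_within_at (r @` set_gmul G U V) hUr y.
  by move=> /dec [_ rUy]; apply: continuous_within_atS (hUrc _ rUy) => z /dec [].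
move=> y Hy; apply: continuous_within_at_gmul => //.
- by move=> z /dec [H _]; have [_ ->] := image_inverse hVrV H.
- exact: cUr.
- apply: (continuous_within_at_comp (B := r @` V)); first by move=> z /dec [].
    apply: (@continuous_within_at_comp _ _ _ _ setT) => //; first exact: cUr.
    exact/continuous_at_within/sc.
  by apply: hVrc; case: (dec _ Hy).
Qed.

Lemma cob_set_gmul U V : cob U -> cob V -> cob (set_gmul G U V).
Proof.
move=> cU cV; apply: cob_of_local_inverses => //.
- exact: set_gmul_compact.
- by apply: set_gmul_open cU _; case: cV.
- exact: set_gmul_src_inverse.
- exact: set_gmul_rng_inverse.
Qed.


Lemma cob_unit_nbhs x W : X x -> open W -> W x ->
  exists C, [/\ cob C, C x, C `<=` W & C `<=` X].
Proof.
move=> Xx oW Wx; case: amp => _ lc haus td _.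
have [C [cC oC Cx CW CX]] :=
  compact_open_nbhs_sub haus (open_unit_space Hs) lc td Xx oW Wx.
by exists C; split => //; exact: cob_unit.
Qed.

Lemma cob_isotropy_nbhs g0 : interior (isotropy G) g0 ->
  exists B, [/\ cob B, cob (s @` B), B g0 & B `<=` isotropy G].
Proof.
move=> Ig0; have [Us [oUs Usg0 _ [_ [hs [hsU /within_continuousP hsc]]]]] := Hs g0.
have [Ur [oUr Urg0 _ [_ [hr [hrU /within_continuousP hrc]]]]] := Hr g0.
pose W := Us `&` Ur `&` interior (isotropy G).
have oW : open W by apply: openI; [exact: openI | exact: open_interior].
have WUs : W `<=` Us by move=> z [[]].
have [C [cC Cg0 CW CX]] :
    exists C, [/\ cob C, C (s g0), C `<=` s @` W & C `<=` X].
  by apply: cob_unit_nbhs; [exact: src_unit | exact: local_homeo_open | exists g0].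
pose B := W `&` s @^-1` C.
have sB : s @` B = C.
  apply/seteqP; split => [_ [b [_ Cb] <-] // | y Cy].
  by have [w Ww wy] := CW _ Cy; exists w; rewrite /B /preimage /= wy.
have CUs : C `<=` s @` Us by move=> y /CW [w /WUs Uw <-]; exists w.
have hsC y : C y -> continuous_within_at C hs y.
  by move=> Cy; apply: continuous_within_atS (hsc _ (CUs _ Cy)).
exists B; split => //; last by move=> b [[_ /interior_subset]].
- case: (cob_local_inverses cC) => _ oC _ _.
  apply: cob_of_local_inverses => //.
  + have -> : B = hs @` C.
      apply/seteqP; split => [b [Wb Cb] | _ [y Cy <-]].
        by exists (s b) => //; rewrite hsU //; exact: WUs.
      have [w Ww wy] := CW _ Cy; rewrite -wy hsU; last exact: WUs.
      by split => //; rewrite /preimage /= wy.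
    by apply: continuous_compact; [apply/within_continuousP | case: cC].
  + by apply: openI => //; move/continuousP: sc; apply; case: cC.
  + by exists hs; split => [b [/WUs /hsU] //|]; rewrite sB.
  + have rB : r @` B `<=` r @` Ur by move=> _ [b [[[_ Ub] _] _] <-]; exists b.
    exists hr; split => [b [[[_ /hrU]]] //|y /rB ry].
    by apply: continuous_within_atS (hrc _ ry).
- by rewrite sB.
Qed.
End AmpleGroupoid.

(** * Convolution in the Steinberg algebra *)

Section FiniteSupportSums.
Context {S : comNzSemiRingType} {J : choiceType}.

Lemma mulr_neq0l (a b : S) : a * b != 0 -> a != 0.
Proof. by apply: contra => /eqP ->; rewrite mul0r. Qed.

Lemma mulr_neq0r (a b : S) : a * b != 0 -> b != 0.
Proof. by apply: contra => /eqP ->; rewrite mulr0. Qed.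

Lemma fsbig_setI_supp (P D : set J) (F : J -> S) :
  (forall j, P j -> F j != 0 -> D j) ->
  \sum_(j \in P) F j = \sum_(j \in P `&` D) F j.
Proof.
move=> sD; apply/esym/fsbig_widen => [j [] //|j [Pj nPDj]].
by apply/eqP; apply: contrapT => /negP Fj; apply: nPDj; split => //; exact: sD.
Qed.

Lemma fsbigD_supp (P D : set J) (F1 F2 : J -> S) : finite_set D ->
  (forall j, P j -> F1 j != 0 -> D j) -> (forall j, P j -> F2 j != 0 -> D j) ->
  \sum_(j \in P) (F1 j + F2 j) = \sum_(j \in P) F1 j + \sum_(j \in P) F2 j.
Proof.
move=> fD s1 s2; have fPD : finite_set (P `&` D) by exact: finite_setIr.
have s12 j : P j -> F1 j + F2 j != 0 -> D j.
  move=> Pj; have [/eqP F1j|F1j _] := boolP (F1 j == 0); last exact: s1.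
  by rewrite F1j add0r; exact: s2.
by rewrite !(fsbig_setI_supp s1, fsbig_setI_supp s2, fsbig_setI_supp s12)
  !fsbig_finite // big_split.
Qed.

Lemma fsbig_mull_supp (P D : set J) c (F : J -> S) : finite_set D ->
  (forall j, P j -> F j != 0 -> D j) ->
  c * \sum_(j \in P) F j = \sum_(j \in P) c * F j.
Proof.
move=> fD sD; have fPD : finite_set (P `&` D) by exact: finite_setIr.
have scF j : P j -> c * F j != 0 -> D j by move=> Pj /mulr_neq0r; exact: sD.
by rewrite (fsbig_setI_supp sD) (fsbig_setI_supp scF) !fsbig_finite // mulr_sumr.
Qed.

Lemma fsbig_mulr_supp (P D : set J) c (F : J -> S) : finite_set D ->
  (forall j, P j -> F j != 0 -> D j) ->
  (\sum_(j \in P) F j) * c = \sum_(j \in P) F j * c.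
Proof.
move=> fD sD; have fPD : finite_set (P `&` D) by exact: finite_setIr.
have sFc j : P j -> F j * c != 0 -> D j by move=> Pj /mulr_neq0l; exact: sD.
by rewrite (fsbig_setI_supp sD) (fsbig_setI_supp sFc) !fsbig_finite // mulr_suml.
Qed.

End FiniteSupportSums.

Lemma subset1_finite {T : Type} (A : set T) : is_subset1 A -> finite_set A.
Proof.
move=> A1; have [[a Aa]|nA] := pselect (A !=set0).
  by apply: (@sub_finite_set _ _ [set a]) (finite_set1 a) => b Ab; exact: A1.
rewrite (_ : A = set0) ?finite_set0 //.
by apply/seteqP; split => // b Ab; apply: nA; exists b.
Qed.

Section SteinbergAlgebra.
Context {T : topologicalType} (G : groupoid T) (S : comNzSemiRingType).
Local Notation s := (src G).
Local Notation r := (rng G).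
Local Notation "a ** b" := (gmul G a b) (at level 40).
Local Notation cob := (compact_open_bisection G).
Local Notation A := (@steinberg T G S).
Local Notation conv := (@steinberg_conv T G S).

Definition ind (c : S) (U : set T) (x : T) : S := if x \in U then c else 0.

Lemma ind_in c U x : U x -> ind c U x = c.
Proof. by move=> Ux; rewrite /ind ifT // inE. Qed.

Lemma ind_out c U x : ~ U x -> ind c U x = 0.
Proof. by move=> nUx; rewrite /ind ifF //; apply/negP => /set_mem. Qed.

Lemma steinberg0 : A (fun=> 0).
Proof. by exists [::]; split => //; apply: funext => x; rewrite big_nil. Qed.

Lemma steinberg_ind c U : cob U -> A (ind c U).
Proof.
move=> cU; exists [:: (c, U)]; split; first by move=> q; rewrite inE => /eqP ->.
by apply: funext => x; rewrite big_seq1.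
Qed.

Lemma steinberg_add f g : A f -> A g -> A (sadd f g).
Proof.
move=> [l [Hl ->]] [m [Hm ->]]; exists (l ++ m); split.
  by move=> q; rewrite mem_cat => /orP [/Hl|/Hm].
by apply: funext => x; rewrite /sadd big_cat.
Qed.

Lemma steinberg_rect (P : (T -> S) -> Prop) : P (fun=> 0) ->
  (forall c U f, cob U -> A f -> P f -> P (sadd (ind c U) f)) ->
  forall f, A f -> P f.
Proof.
move=> P0 PS _ [l [Hl ->]]; elim: l Hl => [|q l IH] Hl.
  by rewrite (_ : (fun _ => _) = fun=> 0) // funeqE => x; rewrite big_nil.
have Hl' q' : q' \in l -> cob q'.2 by move=> ql; apply: Hl; rewrite inE ql orbT.
rewrite (_ : (fun _ => _) = sadd (ind q.1 q.2) (fun x =>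
    \sum_(p <- l) (if x \in p.2 then p.1 else 0))); last first.
  by rewrite funeqE => x; rewrite big_cons.
by apply: PS; [exact/Hl/mem_head | exists l | exact: IH].
Qed.

Lemma steinberg_supp_finite (p : T -> T) f x :
  (forall U, cob U -> {in U &, injective p}) -> A f ->
  finite_set [set g | p g = x /\ f g != 0].
Proof.
move=> pinj; move: f; apply: steinberg_rect => [|c U f cU _ IH].
  by rewrite (_ : [set _ | _] = set0) ?finite_set0 // -subset0 => g [_ /eqP].
apply: (@sub_finite_set _ _
  ([set g | U g /\ p g = x] `|` [set g | p g = x /\ f g != 0])).
  move=> g [pg]; rewrite /sadd; have [Ug _|nUg] := pselect (U g); first by left.
  by rewrite ind_out // add0r => fg; right.
rewrite finite_setU; split => //; apply: subset1_finite => a b [Ua pa] [Ub pb].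
by apply: (pinj U cU); rewrite ?inE // pa pb.
Qed.

Definition factorizations x :=
  [set p : T * T | s p.1 = r p.2 /\ p.1 ** p.2 = x].

Lemma convE f g x : conv f g x = \sum_(p \in factorizations x) f p.1 * g p.2.
Proof. by []. Qed.

Lemma factorizations_fst x p : factorizations x p ->
  r p.1 = r x /\ p = (p.1, ginv G p.1 ** x).
Proof. by case: p => a b [/= ab <-]; rewrite rng_gmul // gmulKg. Qed.

Lemma factorizations_snd x p : factorizations x p ->
  s p.2 = s x /\ p = (x ** ginv G p.2, p.2).
Proof. by case: p => a b [/= ab <-]; rewrite src_gmul // gmulgK. Qed.

Lemma factorizations_fstP a x : r a = r x -> factorizations x (a, ginv G a ** x).
Proof.
by move=> ax; rewrite /factorizations /= rng_gmul ?src_ginv ?rng_ginv ?gmulKVg.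
Qed.

Lemma factorizations_sndP b x : s b = s x -> factorizations x (x ** ginv G b, b).
Proof.
by move=> bx; rewrite /factorizations /= src_gmul ?src_ginv ?rng_ginv ?gmulgKV.
Qed.

Lemma conv_supp_fst_finite f x : A f ->
  finite_set [set p | factorizations x p /\ f p.1 != 0].
Proof.
move=> Af; apply: (@sub_finite_set _ _
  ((fun a => (a, ginv G a ** x)) @` [set a | r a = r x /\ f a != 0])).
  by move=> p [/factorizations_fst [rp ->] fp]; exists p.1.
by apply/finite_image/steinberg_supp_finite => // U /cob_rng_inj.
Qed.

Lemma conv_supp_snd_finite f x : A f ->
  finite_set [set p | factorizations x p /\ f p.2 != 0].
Proof.
move=> Af; apply: (@sub_finite_set _ _
  ((fun b => (x ** ginv G b, b)) @` [set b | s b = s x /\ f b != 0])).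
  by move=> p [/factorizations_snd [sp ->] fp]; exists p.2.
by apply/finite_image/steinberg_supp_finite => // U /cob_src_inj.
Qed.

Lemma conv_saddl f1 f2 h : A f1 -> A f2 ->
  conv (sadd f1 f2) h = sadd (conv f1 h) (conv f2 h).
Proof.
move=> A1 A2; apply: funext => x; rewrite /sadd !convE.
under eq_fsbigr do rewrite mulrDl.
apply: (fsbigD_supp (D := [set p | factorizations x p /\ f1 p.1 != 0] `|`
                           [set p | factorizations x p /\ f2 p.1 != 0])).
- by rewrite finite_setU; split; exact: conv_supp_fst_finite.
- by move=> p Pp /mulr_neq0l; left.
- by move=> p Pp /mulr_neq0l; right.
Qed.

Lemma conv_saddr h f1 f2 : A f1 -> A f2 ->
  conv h (sadd f1 f2) = sadd (conv h f1) (conv h f2).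
Proof.
move=> A1 A2; apply: funext => x; rewrite /sadd !convE.
under eq_fsbigr do rewrite mulrDr.
apply: (fsbigD_supp (D := [set p | factorizations x p /\ f1 p.2 != 0] `|`
                           [set p | factorizations x p /\ f2 p.2 != 0])).
- by rewrite finite_setU; split; exact: conv_supp_snd_finite.
- by move=> p Pp /mulr_neq0r; left.
- by move=> p Pp /mulr_neq0r; right.
Qed.

Lemma conv0l h : conv (fun=> 0) h = fun=> 0.
Proof. by apply: funext => x; apply: fsbig1 => p _; rewrite mul0r. Qed.

Lemma conv0r h : conv h (fun=> 0) = fun=> 0.
Proof. by apply: funext => x; apply: fsbig1 => p _; rewrite mulr0. Qed.

Section IndicatorConvolution.
Variables (c : S) (U : set T) (h : T -> T).

Lemma conv_indl_in f x : (forall a, U a -> h (r a) = a) -> (r @` U) (r x) ->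
  conv (ind c U) f x = c * f (ginv G (h (r x)) ** x).
Proof.
move=> hU rx; have [Ua ra] := image_inverse hU rx; rewrite convE.
rewrite -(fsbig_widen [set (h (r x), ginv G (h (r x)) ** x)] (factorizations x)).
- by rewrite fsbig_set1 ind_in.
- by move=> _ ->; exact: factorizations_fstP.
- move=> p [/factorizations_fst [rp ep] np]; rewrite /preimage /=.
  have [Up|nUp] := pselect (U p.1); last by rewrite ind_out ?mul0r.
  by exfalso; apply: np; rewrite ep -rp hU.
Qed.

Lemma conv_indl_out f x : ~ (r @` U) (r x) -> conv (ind c U) f x = 0.
Proof.
move=> nrx; apply: fsbig1 => p /factorizations_fst [rp _].
by rewrite ind_out ?mul0r // => Up; apply: nrx; exists p.1.
Qed.

Lemma conv_indr_in f x : (forall b, U b -> h (s b) = b) -> (s @` U) (s x) ->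
  conv f (ind c U) x = f (x ** ginv G (h (s x))) * c.
Proof.
move=> hU sx; have [Ub sb] := image_inverse hU sx; rewrite convE.
rewrite -(fsbig_widen [set (x ** ginv G (h (s x)), h (s x))] (factorizations x)).
- by rewrite fsbig_set1 ind_in.
- by move=> _ ->; exact: factorizations_sndP.
- move=> p [/factorizations_snd [sp ep] np]; rewrite /preimage /=.
  have [Up|nUp] := pselect (U p.2); last by rewrite ind_out ?mulr0.
  by exfalso; apply: np; rewrite ep -sp hU.
Qed.

Lemma conv_indr_out f x : ~ (s @` U) (s x) -> conv f (ind c U) x = 0.
Proof.
move=> nsx; apply: fsbig1 => p /factorizations_snd [sp _].
by rewrite ind_out ?mulr0 // => Up; apply: nsx; exists p.2.
Qed.

End IndicatorConvolution.

Lemma conv_ind_ind c d U V : cob U ->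
  conv (ind c U) (ind d V) = ind (c * d) (set_gmul G U V).
Proof.
case/cob_rng_inv => hr hU; apply: funext => x.
have [rx|nrx] := pselect ((r @` U) (r x)); last first.
  rewrite conv_indl_out // ind_out // => -[a [b [Ua _ ab xe]]].
  by apply: nrx; exists a; rewrite // xe rng_gmul.
rewrite (conv_indl_in _ _ hU rx); have [Ua ra] := image_inverse hU rx.
have [Vb|nVb] := pselect (V (ginv G (hr (r x)) ** x)).
  rewrite !ind_in //; exists (hr (r x)), (ginv G (hr (r x)) ** x).
  by split => //; [rewrite rng_gmul ?rng_ginv // src_ginv | rewrite gmulKVg].
rewrite ind_out ?mulr0 ?ind_out // => -[a [b [Ua' Vb ab xe]]]; apply: nVb.
by rewrite xe rng_gmul // hU // gmulKg.
Qed.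

Lemma steinberg_conv_closed f g : ample G -> A f -> A g -> A (conv f g).
Proof.
move=> amp Af Ag; move: f Af; apply: steinberg_rect => [|c U f cU Af Afg].
  by rewrite conv0l; exact: steinberg0.
rewrite conv_saddl //; last exact: steinberg_ind.
apply: steinberg_add => //.
move: g Ag {Afg}; apply: steinberg_rect => [|d V g cV Ag IH].
  by rewrite conv0r; exact: steinberg0.
rewrite conv_saddr // ?conv_ind_ind //; last exact: steinberg_ind.
by apply: steinberg_add => //; apply/steinberg_ind/cob_set_gmul.
Qed.

End SteinbergAlgebra.

(** * Congruences given by kernels *)

Section CongruenceKernel.
Context {R Y : Type} (A : set R) (add mul : R -> R -> R) (phi : R -> Y).

Definition kernel_compatible := forall t a b, A t -> A a -> A b -> phi a = phi b ->
  [/\ phi (add t a) = phi (add t b), phi (mul t a) = phi (mul t b)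
    & phi (mul a t) = phi (mul b t)].

Lemma congruence_simple_kernel :
  (forall a b, A a -> A b -> A (add a b)) -> (forall a b, A a -> A b -> A (mul a b)) ->
  congruence_simple A add mul -> kernel_compatible ->
  (forall a b, A a -> A b -> phi a = phi b) \/
  (forall a b, A a -> A b -> phi a = phi b -> a = b).
Proof.
move=> Aadd Amul cs kc.
have cE : congruence A add mul (fun a b => [/\ A a, A b & phi a = phi b]).
  split=> [a b []//|a Aa|a b [Aa Ab e]|a b c [Aa _ e1] [_ Ac e2]|a b t At [Aa Ab e]].
  - by [].
  - by [].
  - by rewrite e1 e2.
  - by have [e1 e2 e3] := kc t a b At Aa Ab e; split; split; auto.
have [H|H] := cs _ cE.
  by left => a b Aa Ab; case: (H a b Aa Ab).
by right => a b Aa Ab e; exact: H.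
Qed.

End CongruenceKernel.

Section Semifield.
Context {S : comNzSemiRingType}.
Hypothesis sf : semifield S.

Lemma semifield_mulf_eq0 (a b : S) : (a * b == 0) = (a == 0) || (b == 0).
Proof.
apply/idP/idP => [/eqP ab0|/orP [/eqP ->|/eqP ->]]; rewrite ?mul0r ?mulr0 //.
have [//|a0 /=] := eqP; have /sf [a' aa'] : a != 0 by exact/eqP.
by rewrite -[b]mul1r -aa' mulrC mulrA (mulrC b) ab0 mul0r.
Qed.

Lemma semifield_field_or_zerosumfree : is_field_semiring S \/
  forall a b : S, (a + b == 0) = (a == 0) && (b == 0).
Proof.
have [[a [b [ab0 a0]]]|nab] := pselect (exists a b : S, a + b = 0 /\ a != 0).
  left => x; have [a' aa'] := sf a0; exists (x * (a' * b)).
  transitivity (x * a' * (a + b)); last by rewrite ab0 mulr0.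
  by rewrite mulrDr -!mulrA (mulrC a' a) aa' mulr1.
right => a b; apply/eqP/andP => [ab0|[/eqP -> /eqP ->]]; last by rewrite addr0.
have a0 : a = 0 by apply: contrapT => /eqP a0; apply: nab; exists a, b.
by move: ab0; rewrite a0 add0r => ->.
Qed.

Lemma boolean_semifieldP :
  (forall a b : S, (a + b == 0) = (a == 0) && (b == 0)) ->
  (forall a : S, a != 0 -> a = 1) -> is_boolean_semifield S.
Proof.
move=> zsf a01; exists (fun a => a != 0); split.
- exists (fun b : bool => if b then 1 else 0) => [a|[]] /=; last 2 first.
  + by rewrite oner_eq0.
  + by rewrite eqxx.
  by have [->|/a01] := eqVneq a 0.
- by rewrite eqxx.
- by rewrite oner_eq0.
- by move=> a b; rewrite zsf negb_and.
- by move=> a b; rewrite semifield_mulf_eq0 negb_or.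
Qed.

End Semifield.

Section FibreSums.
Context {T : topologicalType} (G : groupoid T) (S : comNzSemiRingType).
Local Notation s := (src G).
Local Notation r := (rng G).
Local Notation "a ** b" := (gmul G a b) (at level 40).
Local Notation cob := (compact_open_bisection G).
Local Notation A := (@steinberg T G S).
Local Notation conv := (@steinberg_conv T G S).
Local Notation ind := (@ind T S).

Definition fibre x y := [set g : T | r g = x /\ s g = y].

Definition fibre_sum (f : T -> S) x y := \sum_(g \in fibre x y) f g.

Lemma fibre_supp_finite f x y : A f -> finite_set [set g | fibre x y g /\ f g != 0].
Proof.
move=> Af; apply: (@sub_finite_set _ _ [set g | r g = x /\ f g != 0]).
  by move=> g [[rg _] fg].
by apply: (@steinberg_supp_finite _ G) Af => U /cob_rng_inj.
Qed.

Lemma fibre_sum_sadd f g x y : A f -> A g ->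
  fibre_sum (sadd f g) x y = fibre_sum f x y + fibre_sum g x y.
Proof.
move=> Af Ag; apply: (fsbigD_supp (D := [set g | fibre x y g /\ f g != 0] `|`
                                      [set h | fibre x y h /\ g h != 0])).
- by rewrite finite_setU; split; exact: fibre_supp_finite.
- by move=> h Fh fh; left.
- by move=> h Fh gh; right.
Qed.

Lemma fibre_sum0 x y : fibre_sum (fun=> 0) x y = 0.
Proof. exact: fsbig1. Qed.

Lemma fibre_sum_conv_indl c U h f x y : (forall a, U a -> h (r a) = a) ->
  (r @` U) x -> A f -> fibre_sum (conv (ind c U) f) x y = c * fibre_sum f (s (h x)) y.
Proof.
move=> hU rx Af; have [Ua ra] := image_inverse hU rx; set a := h x in Ua ra *.
rewrite /fibre_sum (eq_fsbigr (fun g => c * f (ginv G a ** g))); last first.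
  by move=> g /set_mem [rg _]; rewrite (conv_indl_in c f hU) rg.
rewrite (reindex_fsbig (fun b => a ** b) (fibre (s a) y)).
  under eq_fsbigr => b /set_mem [rb _] do rewrite gmulKg ?rb //.
  apply/esym/(fsbig_mull_supp (D := [set g | fibre (s a) y g /\ f g != 0])) => //.
  exact: fibre_supp_finite.
split.
- by move=> b [rb sb]; split; rewrite ?rng_gmul ?src_gmul ?rb.
- move=> b b' /set_mem [rb _] /set_mem [rb' _] e.
  by rewrite -(gmulKg (esym rb)) e gmulKg ?rb'.
- move=> g [rg sg]; exists (ginv G a ** g); last by rewrite gmulKVg ?ra.
  by split; rewrite ?rng_gmul ?src_gmul ?rng_ginv ?src_ginv ?ra ?rg.
Qed.

Lemma fibre_sum_conv_indl_out c U f x y : ~ (r @` U) x ->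
  fibre_sum (conv (ind c U) f) x y = 0.
Proof. by move=> nrx; apply: fsbig1 => g [rg _]; rewrite conv_indl_out ?rg. Qed.

Lemma fibre_sum_conv_indr c U h f x y : (forall b, U b -> h (s b) = b) ->
  (s @` U) y -> A f -> fibre_sum (conv f (ind c U)) x y = fibre_sum f x (r (h y)) * c.
Proof.
move=> hU sy Af; have [Ub sb] := image_inverse hU sy; set b := h y in Ub sb *.
rewrite /fibre_sum (eq_fsbigr (fun g => f (g ** ginv G b) * c)); last first.
  by move=> g /set_mem [_ sg]; rewrite (conv_indr_in c f hU) sg.
rewrite (reindex_fsbig (fun z => z ** b) (fibre x (r b))).
  under eq_fsbigr => z /set_mem [_ sz] do rewrite gmulgK ?sz //.
  apply/esym/(fsbig_mulr_supp (D := [set g | fibre x (r b) g /\ f g != 0])) => //.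
  exact: fibre_supp_finite.
split.
- by move=> z [rz sz]; split; rewrite ?rng_gmul ?src_gmul ?sz.
- move=> z z' /set_mem [_ sz] /set_mem [_ sz'] e.
  by rewrite -(gmulgK sz) e gmulgK ?sz'.
- move=> g [rg sg]; exists (g ** ginv G b); last by rewrite gmulgKV ?sb.
  by split; rewrite ?rng_gmul ?src_gmul ?rng_ginv ?src_ginv ?sb ?sg.
Qed.

Lemma fibre_sum_conv_indr_out c U f x y : ~ (s @` U) y ->
  fibre_sum (conv f (ind c U)) x y = 0.
Proof. by move=> nsy; apply: fsbig1 => g [_ sg]; rewrite conv_indr_out ?sg. Qed.

Lemma fibre_sum_ind c (U : set T) x y u : {in U &, injective s} -> U u -> fibre x y u ->
  fibre_sum (ind c U) x y = c.
Proof.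
move=> sU Uu Fu; rewrite /fibre_sum -(fsbig_widen [set u] (fibre x y)).
- by rewrite fsbig_set1 ind_in.
- by move=> _ ->.
move=> g [[rg sg] ngu]; rewrite /preimage /= ind_out // => Ug; apply: ngu.
by apply: sU; rewrite ?inE // sg; case: Fu.
Qed.

Lemma fibre_sum_ind_out c (U : set T) x y : (forall u, U u -> ~ fibre x y u) ->
  fibre_sum (ind c U) x y = 0.
Proof. by move=> nU; apply: fsbig1 => g Fg; rewrite ind_out // => /nU. Qed.

End FibreSums.

Section SteinbergCongruences.
Context {T : topologicalType} (G : groupoid T) (S : comNzSemiRingType).
Local Notation s := (src G).
Local Notation r := (rng G).
Local Notation "a ** b" := (gmul G a b) (at level 40).
Local Notation X := (unit_space G).
Local Notation cob := (compact_open_bisection G).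
Local Notation A := (@steinberg T G S).
Local Notation conv := (@steinberg_conv T G S).
Local Notation ind := (@ind T S).
Hypothesis amp : ample G.
Hypothesis simple : congruence_simple A (@sadd T S) conv.

(* Compatibility with convolution by the generators [c 1_U] propagates to all of
   [A_S(G)] because convolution distributes over [sadd]. *)
Lemma steinberg_kernel_dichotomy (Y : Type) (phi : (T -> S) -> Y) :
  (forall f g f' g', A f -> A g -> A f' -> A g' -> phi f = phi f' ->
     phi g = phi g' -> phi (sadd f g) = phi (sadd f' g')) ->
  (forall c U f f', cob U -> A f -> A f' -> phi f = phi f' ->
     phi (conv (ind c U) f) = phi (conv (ind c U) f') /\
     phi (conv f (ind c U)) = phi (conv f' (ind c U))) ->
  (forall f g, A f -> A g -> phi f = phi g) \/
  (forall f g, A f -> A g -> phi f = phi g -> f = g).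
Proof.
move=> phiD phiC.
have Aconv f g : A f -> A g -> A (conv f g) by exact: steinberg_conv_closed.
have Aadd f g : A f -> A g -> A (sadd f g) by exact: steinberg_add.
apply: (congruence_simple_kernel Aadd Aconv simple).
move=> t a b At Aa Ab e; split; first exact: phiD.
- move: t At; apply: steinberg_rect => [|c U t cU At IH]; first by rewrite !conv0l.
  have Ac := steinberg_ind c cU.
  rewrite !conv_saddl //; apply: phiD; rewrite ?(proj1 (phiC c U a b _ _ _ _)) //;
    exact: Aconv.
- move: t At; apply: steinberg_rect => [|c U t cU At IH]; first by rewrite !conv0r.
  have Ac := steinberg_ind c cU.
  rewrite !conv_saddr //; apply: phiD; rewrite ?(proj2 (phiC c U a b _ _ _ _)) //;
    exact: Aconv.
Qed.


Lemma steinberg_simple_semifield : semifield S -> (exists x, X x) ->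
  is_field_semiring S \/ is_boolean_semifield S.
Proof.
move=> sf [x0 Xx0]; have [|zsf] := semifield_field_or_zerosumfree sf; first by left.
right; apply: boolean_semifieldP => // a a0.
have [C [cC Cx0 _ _]] := cob_unit_nbhs amp Xx0 openT I.
pose phi (f : T -> S) x := f x == 0.
have phiD f g f' g' : A f -> A g -> A f' -> A g' -> phi f = phi f' ->
    phi g = phi g' -> phi (sadd f g) = phi (sadd f' g').
  move=> _ _ _ _ ef eg; apply: funext => x.
  by move: (congr1 (@^~ x) ef) (congr1 (@^~ x) eg); rewrite /phi /sadd !zsf => -> ->.
have phiC c U f f' : cob U -> A f -> A f' -> phi f = phi f' ->
    phi (conv (ind c U) f) = phi (conv (ind c U) f') /\
    phi (conv f (ind c U)) = phi (conv f' (ind c U)).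
  move=> cU _ _ ef; have efy y : (f y == 0) = (f' y == 0) by exact: (congr1 (@^~ y) ef).
  split; apply: funext => x; rewrite /phi.
  + have [hr hU] := cob_rng_inv cU.
    have [rx|nrx] := pselect ((r @` U) (r x)); last by rewrite !conv_indl_out.
    rewrite (conv_indl_in c f hU rx) (conv_indl_in c f' hU rx).
    by rewrite !(semifield_mulf_eq0 sf) efy.
  + have [hs hU] := cob_src_inv cU.
    have [sx|nsx] := pselect ((s @` U) (s x)); last by rewrite !conv_indr_out.
    rewrite (conv_indr_in c f hU sx) (conv_indr_in c f' hU sx).
    by rewrite !(semifield_mulf_eq0 sf) efy.
have [phi_const|phi_inj] := steinberg_kernel_dichotomy phiD phiC.
- have := congr1 (@^~ x0) (phi_const _ _ (steinberg_ind 1 cC) (steinberg0 G S)).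
  by rewrite /phi ind_in // oner_eq0 eqxx.
- have /phi_inj /(congr1 (@^~ x0)) : phi (ind a C) = phi (ind 1 C).
    apply: funext => x; rewrite /phi; have [Cx|nCx] := pselect (C x).
      by rewrite !ind_in // oner_eq0 (negbTE a0).
    by rewrite !ind_out.
  by rewrite !ind_in //; apply; exact: steinberg_ind.
Qed.

Lemma steinberg_simple_minimal : minimal_groupoid G.
Proof.
move=> D oiD invD; have DX : D `<=` X by case: oiD => O [_ ->] z [].
have oD : open D by apply: open_in_unit_space_open oiD; case: amp => _ _ _ _ [].
have [[d Dd]|nD] := pselect (D !=set0); last first.
  by left; apply/seteqP; split => // z Dz; apply: nD; exists z.
right; apply/seteqP; split => // u Xu; apply: contrapT => nDu.
have [C1 [cC1 C1d C1D C1X]] := cob_unit_nbhs amp (DX _ Dd) oD Dd.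
have [C2 [cC2 C2u _ _]] := cob_unit_nbhs amp Xu openT I.
pose phi (f : T -> S) x := if pselect (D (s x)) then 0 else f x.
have phiE f f' : (forall x, ~ D (s x) -> f x = f' x) -> phi f = phi f'.
  by move=> ff'; apply: funext => x; rewrite /phi; case: pselect => // nD; exact: ff'.
have phiP f f' x : phi f = phi f' -> ~ D (s x) -> f x = f' x.
  by move=> /(congr1 (@^~ x)); rewrite /phi; case: pselect.
have phiD f g f' g' : A f -> A g -> A f' -> A g' -> phi f = phi f' ->
    phi g = phi g' -> phi (sadd f g) = phi (sadd f' g').
  move=> _ _ _ _ ef eg; apply: phiE => x nDx.
  by rewrite /sadd (phiP _ _ _ ef nDx) (phiP _ _ _ eg nDx).
have phiC c U f f' : cob U -> A f -> A f' -> phi f = phi f' ->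
    phi (conv (ind c U) f) = phi (conv (ind c U) f') /\
    phi (conv f (ind c U)) = phi (conv f' (ind c U)).
  move=> cU _ _ ef; split; apply: phiE => x nDx.
  + have [hr hU] := cob_rng_inv cU.
    have [rx|nrx] := pselect ((r @` U) (r x)); last by rewrite !conv_indl_out.
    have [_ ra] := image_inverse hU rx.
    rewrite (conv_indl_in c f hU rx) (conv_indl_in c f' hU rx) (phiP _ _ _ ef) //.
    by rewrite src_gmul ?src_ginv.
  + have [hs hU] := cob_src_inv cU.
    have [sx|nsx] := pselect ((s @` U) (s x)); last by rewrite !conv_indr_out.
    have [_ sb] := image_inverse hU sx.
    rewrite (conv_indr_in c f hU sx) (conv_indr_in c f' hU sx) (phiP _ _ _ ef) //.
    rewrite src_gmul ?src_ginv ?rng_ginv // => Drb; apply: nDx.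
    by rewrite -sb -rng_ginv; apply: invD; rewrite src_ginv.
have [phi_const|phi_inj] := steinberg_kernel_dichotomy phiD phiC.
- have := phiP _ _ u (phi_const _ _ (steinberg_ind 1 cC2) (steinberg0 G S)).
  by rewrite ind_in // Xu => /(_ nDu) /eqP; rewrite oner_eq0.
- have: ind 1 C1 = fun=> 0.
    apply: phi_inj; [exact: steinberg_ind | exact: steinberg0 |].
    apply: phiE => x nDx; rewrite ind_out // => C1x; apply: nDx.
    by rewrite (C1X _ C1x); exact: C1D.
  by move/(congr1 (@^~ d)); rewrite /= ind_in // => /eqP; rewrite oner_eq0.
Qed.

Lemma steinberg_simple_effective : effective_groupoid G.
Proof.
have oX : open X by apply: open_unit_space; case: amp => _ _ _ _ [].
apply/seteqP; split; last first.
  move=> x Xx; apply: filterS (open_nbhs_nbhs (conj oX Xx)) => z Xz.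
  by rewrite /isotropy /= unit_rng.
move=> g0 Ig0; apply: contrapT => nXg0.
have [B [cB cC Bg0 BI]] := cob_isotropy_nbhs amp Ig0.
have CX : s @` B `<=` X by move=> _ [b _ <-]; exact: src_unit.
have Cfibre v : (s @` B) v -> fibre G v v v.
  by move=> /CX Xv; split => //; exact: unit_rng.
pose phi := @fibre_sum T G S.
have phiD f g f' g' : A f -> A g -> A f' -> A g' -> phi f = phi f' ->
    phi g = phi g' -> phi (sadd f g) = phi (sadd f' g').
  move=> Af Ag Af' Ag' ef eg; apply: funext => x; apply: funext => y.
  by rewrite /phi !fibre_sum_sadd // -/phi ef eg.
have phiC c U f f' : cob U -> A f -> A f' -> phi f = phi f' ->
    phi (conv (ind c U) f) = phi (conv (ind c U) f') /\
    phi (conv f (ind c U)) = phi (conv f' (ind c U)).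
  move=> cU Af Af' ef; rewrite /phi in ef *.
  split; apply: funext => x; apply: funext => y.
  + have [hr hU] := cob_rng_inv cU.
    have [rx|nrx] := pselect ((r @` U) x); last by rewrite !fibre_sum_conv_indl_out.
    rewrite (fibre_sum_conv_indl c y hU rx Af).
    by rewrite (fibre_sum_conv_indl c y hU rx Af') // ef.
  + have [hs hU] := cob_src_inv cU.
    have [sy|nsy] := pselect ((s @` U) y); last by rewrite !fibre_sum_conv_indr_out.
    rewrite (fibre_sum_conv_indr c x hU sy Af).
    by rewrite (fibre_sum_conv_indr c x hU sy Af') // ef.
have [phi_const|phi_inj] := steinberg_kernel_dichotomy phiD phiC.
- have Cs : (s @` B) (s g0) by exists g0.
  have := congr1 (fun F => F (s g0) (s g0))
    (phi_const _ _ (steinberg_ind 1 cC) (steinberg0 G S)).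
  rewrite /phi /= fibre_sum0 (fibre_sum_ind _ (cob_src_inj cC) Cs (Cfibre _ Cs)).
  by move/eqP; rewrite oner_eq0.
- have: ind 1 B = ind 1 (s @` B).
    apply: phi_inj; try exact: steinberg_ind.
    apply: funext => x; apply: funext => y; rewrite /phi.
    have [[u [Bu [ru su]]]|nB] := pselect (exists u, B u /\ fibre G x y u).
      have Cu : (s @` B) (s u) by exists u.
      have Fsu : fibre G x y (s u) by split; rewrite ?src_src // rng_src (BI _ Bu).
      rewrite (fibre_sum_ind _ (cob_src_inj cB) Bu) //.
      by rewrite (fibre_sum_ind _ (cob_src_inj cC) Cu Fsu).
    rewrite !fibre_sum_ind_out // => [_ [b Bb <-] [rb sb]|u Bu Fu]; last first.
      by apply: nB; exists u.
    apply: nB; exists b; split => //; split; last by rewrite -sb src_src.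
    by rewrite -rb -BI // rng_src.
  move/(congr1 (@^~ g0)); rewrite /= ind_in // ind_out => [/eqP|/CX //].
  by rewrite oner_eq0.
Qed.

End SteinbergCongruences.

Unset Implicit Arguments.
Local Close Scope ring_scope.
Theorem proposition3p2 (T : topologicalType) (G : groupoid T)
  (S : comNzSemiRingType) :
  ample G -> (exists x, unit_space G x) -> semifield S ->
  congruence_simple (@steinberg T G S) (@sadd T S) (@steinberg_conv T G S) ->
  (is_field_semiring S \/ is_boolean_semifield S) /\ (minimal_groupoid G /\ effective_groupoid G).
Proof.
move=> amp nonempty sf simple; split.
  exact: steinberg_simple_semifield amp simple sf nonempty.
split; [exact: steinberg_simple_minimal amp simple
       | exact: steinberg_simple_effective amp simple].
Qed.
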